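(* Let $G$ be a finitely generated group, $K$ a subgroup of $G$, $\Sigma$ a finite alphabet and $\psi:\Sigma\to G$ a map such that $\psi(\Sigma)$ generates $G$ as a semigroup. Then the word problem $L(G,K,\psi)=\{w\in\Sigma^*:\psi(w)\in K\}$ is growth sensitive, i.e. for every finite non-empty set $F\subset\Sigma^+$ consisting of factors of elements of $L(G,K,\psi)$ one has $\mathsf h(L(G,K,\psi)^F)<\mathsf h(L(G,K,\psi))$.
   Context: $\psi$ is extended to a monoid homomorphism $\Sigma^*\to G$ by $\psi(a_1\cdots a_n)=\psi(a_1)\cdots\psi(a_n)$ and $\psi(\epsilon)=1_G$. $\Sigma^+=\Sigma^*\setminus\{\epsilon\}$; a factor of $a_1\cdots a_n$ is a word $a_i\cdots a_j$ with $1\le i\le j\le n$. For $L\subset\Sigma^*$, $\mathsf h(L)=\limsup_{n\to\infty}\frac1n\log|\{w\in L:|w|=n\}|$ and $L^F=\{w\in L:\text{no }v\in F\text{ is a factor of }w\}$. *)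

From HB Require Import structures.
From mathcomp Require Import all_boot all_order all_algebra.
From mathcomp Require Import monoid.
From mathcomp Require Import boolp classical_sets reals ereal sequences exp.
Set Implicit Arguments. Unset Strict Implicit. Unset Printing Implicit Defensive.
Import Order.TTheory GRing.Theory Num.Theory.

Definition psi_word (Sigma : finType) (G : groupType) (psi : Sigma -> G)
  (w : seq Sigma) : G :=
  foldr (fun a g => (psi a * g)%g) 1%g w.

Definition is_subgroup (G : groupType) (K : set G) : Prop :=
  K 1%g /\ (forall x y, K x -> K y -> K (x * y)%g) /\ (forall x, K x -> K x^-1%g).

Definition generates_as_semigroup (Sigma : finType) (G : groupType)
  (psi : Sigma -> G) : Prop :=
  forall g : G, exists w : seq Sigma, w != [::] /\ psi_word psi w = g.

Definition word_problem (Sigma : finType) (G : groupType) (K : set G)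
  (psi : Sigma -> G) : set (seq Sigma) :=
  [set w | K (psi_word psi w)].

Definition is_factor (Sigma : eqType) (v w : seq Sigma) : Prop :=
  v != [::] /\ infix v w.

Definition avoid (Sigma : eqType) (L : set (seq Sigma)) (F : seq (seq Sigma))
  : set (seq Sigma) :=
  [set w | L w /\ forall v, v \in F -> ~ is_factor v w].

Definition count_len (Sigma : finType) (L : set (seq Sigma)) (n : nat) : nat :=
  #|[set t : n.-tuple Sigma | `[< L (tval t) >]]|.

Definition growth (R : realType) (Sigma : finType) (L : set (seq Sigma)) : \bar R :=
  limn_esup (fun n : nat =>
    if count_len L n == 0%N then -oo%E
    else ((n%:R)^-1 * ln ((count_len L n)%:R : R))%R%:E).

From HB Require Import structures.
From mathcomp Require Import all_boot all_order all_algebra.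
From mathcomp Require Import monoid.
From mathcomp Require Import boolp classical_sets reals ereal sequences exp.
From mathcomp Require Import topology normedtype.
From mathcomp Require Import lra zify.
Set Implicit Arguments. Unset Strict Implicit. Unset Printing Implicit Defensive.
Import Order.TTheory GRing.Theory Num.Theory.

(* Pick v in F and, since psi(Sigma) generates G as a semigroup, a word u with
   psi(v u) = 1; let z = v u and m = |z|.  Cut the first g r m letters of a word
   of L^F of length n into g blocks of length r m and insert one copy of z into
   each block, at one of the r offsets that are multiples of m.  The result lies
   in L, and since words of L^F contain no copy of v, hence none of z, the word
   and the chosen offsets can be read off the result.  So
   r^g |L^F_n| <= |L_(n + g m)|, and for r = 2 |Sigma|^m and g = n / (r m) the
   factor r^g outweighs the growth the g m inserted letters could account for:
   h(L^F) + ln 2 / (2 r m) <= h(L).  Finally h(L) is finite because L contains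
   every power of z. *)

Lemma dvdn_ltn_addl (m k k' : nat) : m %| k -> m %| k' -> k < k' -> k + m <= k'.
Proof.
move=> mk mk' lt_kk'; rewrite -leq_subRL ?(ltnW lt_kk') //.
by apply: dvdn_leq; [rewrite subn_gt0 | exact: dvdn_sub].
Qed.

Section Insertion.
Variables (T : eqType) (z : seq T).

Definition insert_at (k : nat) (w : seq T) : seq T := take k w ++ z ++ drop k w.

Lemma size_insert_at k w : size (insert_at k w) = size w + size z.
Proof. by rewrite !size_cat addnCA -size_cat cat_take_drop addnC. Qed.

Lemma insert_at_inj k w w' : k <= size w -> k <= size w' ->
  insert_at k w = insert_at k w' -> w = w'.
Proof.
move=> kw kw' /eqP; rewrite eqseq_cat ?size_takel // => /andP[/eqP e1].
rewrite eqseq_cat // eqxx => /eqP e2.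
by rewrite -(cat_take_drop k w) e1 e2 cat_take_drop.
Qed.

Lemma infix_insert_at_ltn k k' w w' : k <= size w -> k + size z <= k' ->
  k' <= size w' -> insert_at k w = insert_at k' w' -> infix z w'.
Proof.
move=> kw kk' k'w' E.
have : take (k + size z) (insert_at k w) = take (k + size z) w'.
  by rewrite E /insert_at takel_cat ?size_takel // take_takel.
rewrite /insert_at catA take_size_cat ?size_cat ?size_takel // => e.
by apply: infix_trans (infix_take _ (k + size z)); rewrite -e suffix_infix.
Qed.

Variable b : nat.

Fixpoint insert_blocks (ks : seq nat) (w : seq T) : seq T :=
  if ks is k :: ks' then insert_at k (take b w) ++ insert_blocks ks' (drop b w)
  else w.

Lemma size_insert_blocks ks w : size ks * b <= size w ->
  size (insert_blocks ks w) = size w + size ks * size z.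
Proof.
elim: ks w => [|k ks IH] w /=; first by rewrite addn0.
rewrite mulSn => hw; rewrite size_cat size_insert_at IH size_drop ?size_takel; lia.
Qed.

(* Distinct offsets are multiples of size z, hence at least size z apart. *)
Let slot k := (size z %| k) && (k <= b).

Lemma insert_blocks_inj ks ks' w w' :
  all slot ks -> all slot ks' -> size ks = size ks' -> size w = size w' ->
  size ks * b <= size w -> ~~ infix z w -> ~~ infix z w' ->
  insert_blocks ks w = insert_blocks ks' w' -> ks = ks' /\ w = w'.
Proof.
elim: ks ks' w w' => [|k ks IH] [|k' ks'] w w' //=.
move=> /andP[/andP[zk kb] sks] /andP[/andP[zk' k'b] sks'] [sz] sw.
rewrite mulSn => hw zw zw'.
have tw : size (take b w) = b by rewrite size_takel //; lia.
have tw' : size (take b w') = b by rewrite size_takel // -sw; lia.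
have zb u : ~~ infix z u -> ~~ infix z (take b u).
  by apply: contraNN => /infix_trans; apply; exact: infix_take.
have zd u : ~~ infix z u -> ~~ infix z (drop b u).
  by apply: contraNN => /infix_trans; apply; exact: infix_drop.
move/eqP; rewrite eqseq_cat ?size_insert_at ?tw ?tw' // => /andP[/eqP eb /eqP ed].
have [lt_kk'|lt_k'k|eq_kk'] := ltngtP k k'.
- case/negP: (zb _ zw').
  by apply: infix_insert_at_ltn (dvdn_ltn_addl zk zk' lt_kk') _ eb; rewrite ?tw ?tw'.
- case/negP: (zb _ zw).
  by apply: infix_insert_at_ltn (dvdn_ltn_addl zk' zk lt_k'k) _ (esym eb);
    rewrite ?tw ?tw'.
subst k'.
have sdw : size (drop b w) = size (drop b w') by rewrite !size_drop sw.
have hdw : size ks * b <= size (drop b w) by rewrite size_drop leq_subRL; lia.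
have [-> edw] := IH ks' _ _ sks sks' sz sdw hdw (zd _ zw) (zd _ zw') ed.
split=> //; rewrite -(cat_take_drop b w) -(cat_take_drop b w') edw.
by rewrite (insert_at_inj _ _ eb) // ?tw ?tw'.
Qed.

End Insertion.

Section WordProblem.
Variables (Sigma : finType) (G : groupType) (psi : Sigma -> G).

Lemma psi_word_cat w1 w2 :
  psi_word psi (w1 ++ w2) = (psi_word psi w1 * psi_word psi w2)%g.
Proof. by elim: w1 => [|a w IH] /=; rewrite ?mul1g // -mulgA -IH. Qed.

Variable K : set G.
Variable z : seq Sigma.
Hypothesis psi_z : psi_word psi z = 1%g.

Lemma psi_word_insert_at k w : psi_word psi (insert_at z k w) = psi_word psi w.
Proof. by rewrite !psi_word_cat psi_z mul1g -psi_word_cat cat_take_drop. Qed.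

Lemma psi_word_insert_blocks b ks w :
  psi_word psi (insert_blocks z b ks w) = psi_word psi w.
Proof.
elim: ks w => [|k ks IH] w //=.
by rewrite psi_word_cat psi_word_insert_at IH -psi_word_cat cat_take_drop.
Qed.

Lemma count_len_word_problem_gt0 j :
  K 1%g -> 0 < count_len (word_problem K psi) (j * size z).
Proof.
move=> K1; have [size_zj psi_zj] : size (flatten (nseq j z)) = j * size z /\
    psi_word psi (flatten (nseq j z)) = 1%g.
  by elim: j => [|j [IHs IHp]] //=; rewrite size_cat psi_word_cat IHs IHp psi_z mulg1.
apply/card_gt0P; exists (Tuple (introT eqP size_zj)).
by rewrite inE; apply/asboolP; rewrite /word_problem /= psi_zj.
Qed.

Lemma count_len_avoid_insert_blocks (F : seq (seq Sigma)) v r g n :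
  v != [::] -> v \in F -> infix v z -> g * (r * size z) <= n ->
  r ^ g * count_len (avoid (word_problem K psi) F) n <=
  count_len (word_problem K psi) (n + g * size z).
Proof.
move=> v0 vF vz hn; have z0 : 0 < size z.
  by rewrite lt0n size_eq0; apply: contraNneq v0 => z0; rewrite -infixs0 -z0.
pose slots (c : g.-tuple 'I_r) := [seq i * size z | i : 'I_r <- c].
pose ins (p : n.-tuple Sigma * g.-tuple 'I_r) :=
  insert_blocks z (r * size z) (slots p.2) (tval p.1).
have size_ins (p : n.-tuple Sigma * g.-tuple 'I_r) : size (ins p) == n + g * size z.
  by rewrite size_insert_blocks !size_map !size_tuple.
rewrite /count_len; set A := [set t : n.-tuple Sigma | _].
set B := [set t : _.-tuple Sigma | _].
pose P := finset.setX A [set: g.-tuple 'I_r].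
pose f p : (n + g * size z).-tuple Sigma := Tuple (size_ins p).
have -> : r ^ g * #|A| = #|f @: P|.
  rewrite card_in_imset ?cardsX ?cardsT ?card_tuple ?card_ord 1?mulnC //.
  move=> [t c] [t' c'] /setXP[tA _] /setXP[t'A _] /(congr1 val) /= E.
  move: tA t'A; rewrite !inE => -[_ tF] [_ t'F].
  have zfree u : (forall v, v \in F -> ~ is_factor v u) -> ~~ infix z u.
    by move=> uF; apply/negP => /(infix_trans vz) vu; apply: (uF v vF).
  have slot_ok (c0 : g.-tuple 'I_r) :
      all (fun k => (size z %| k) && (k <= r * size z)) (slots c0).
    apply/allP => _ /mapP[i _ ->].
    by rewrite dvdn_mull // leq_mul2r ltnW ?orbT.
  have slot_inj : injective (fun i : 'I_r => i * size z).
    by move=> i j /eqP; rewrite eqn_pmul2r // => /eqP/val_inj.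
  have sc : size (slots c) = size (slots c') by rewrite !size_map !size_tuple.
  have st : size t = size t' by rewrite !size_tuple.
  have stc : size (slots c) * (r * size z) <= size t.
    by rewrite size_map !size_tuple.
  by have [/(inj_map slot_inj)/val_inj -> /val_inj ->] :=
    insert_blocks_inj (slot_ok c) (slot_ok c') sc st stc (zfree _ tF) (zfree _ t'F) E.
apply: subset_leq_card; apply/fintype.subsetP => _ /imsetP[[t c] /setXP[tA _] ->].
move: tA; rewrite !inE => -[tL _].
by rewrite /word_problem /= psi_word_insert_blocks.
Qed.

End WordProblem.

Section LimnEsup.
Variable R : realType.
Local Open Scope ereal_scope.
Implicit Types (u v : (\bar R)^nat) (a s : \bar R).

Lemma limn_esup_le u s : (forall n, u n <= s) -> limn_esup u <= s.
Proof.
move=> us; rewrite limn_esup_lim; apply: lime_le; first exact: is_cvg_esups.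
by apply: nearW => n; apply: ge_ereal_sup => _ [k _ <-].
Qed.

Lemma limn_esup_ge_frequently u a :
  (forall n, exists2 k, (n <= k)%N & a <= u k) -> a <= limn_esup u.
Proof.
move=> au; rewrite limn_esup_lim; apply: lime_ge; first exact: is_cvg_esups.
apply: nearW => n; have [k nk /le_trans] := au n; apply.
by apply: ereal_sup_ubound; exists k.
Qed.

Lemma limn_esupD_le_reindex u v (f : nat -> nat) n0 (d : R) :
  (forall n, (n0 <= n)%N -> (n <= f n)%N /\ u n + d%:E <= v (f n)) ->
  limn_esup u + d%:E <= limn_esup v.
Proof.
move=> uv; have esups_uv n : (n0 <= n)%N -> esups u n + d%:E <= esups v n.
  move=> n0n; rewrite -leeBrDr //; apply: ge_ereal_sup => _ [k nk <-].
  have [kf ukv] := uv k (leq_trans n0n nk); rewrite leeBrDr //.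
  apply: le_trans ukv _; apply: ereal_sup_ubound.
  by exists (f k) => //=; exact: leq_trans kf.
rewrite [limn_esup v]limn_esup_lim; apply: lime_ge; first exact: is_cvg_esups.
near=> n; apply: le_trans (esups_uv n _); last by near: n; exists n0.
apply: leeD2r; rewrite limn_esup_lim; apply: lime_le; first exact: is_cvg_esups.
by near=> k; apply: nonincreasing_esups; near: k; exists n.
Unshelve. all: by end_near.
Qed.

Lemma limn_esup_lt_reindex u v (f : nat -> nat) n0 (d s : R) :
  (0 < d)%R ->
  (forall n, (n0 <= n)%N -> (n <= f n)%N /\ u n + d%:E <= v (f n)) ->
  (forall n, v n <= s%:E) -> (forall n, exists2 k, (n <= k)%N & 0 <= v k) ->
  limn_esup u < limn_esup v.
Proof.
move=> d0 uv vs v0; have := limn_esupD_le_reindex uv.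
have : limn_esup v \is a fin_num.
  rewrite ge0_fin_numE ?limn_esup_ge_frequently //.
  exact: le_lt_trans (limn_esup_le vs) (ltry s).
case: (limn_esup u) => [x| |] vfin; last by case/fin_numPlt/andP: vfin.
- by apply: lt_le_trans; rewrite lteDl.
- by rewrite addye // leye_eq => /eqP vy; rewrite vy in vfin.
Qed.

End LimnEsup.

Section LnNat.
Variable R : realType.
Local Open Scope ring_scope.

Lemma ln_natM (x y : nat) : (0 < x)%N -> (0 < y)%N ->
  ln ((x * y)%:R : R) = ln x%:R + ln y%:R.
Proof. by move=> x0 y0; rewrite natrM lnM // posrE ltr0n. Qed.

Lemma ln_natX (x e : nat) : (0 < x)%N -> ln ((x ^ e)%:R : R) = e%:R * ln x%:R.
Proof. by move=> x0; rewrite natrX lnXn ?ltr0n // mulr_natl. Qed.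

Lemma ler_ln_nat (x y : nat) : (0 < x)%N -> (x <= y)%N -> ln (x%:R : R) <= ln y%:R.
Proof. by move=> x0 xy; rewrite ler_ln ?posrE ?ltr0n ?ler_nat // (leq_trans x0). Qed.

(* With alpha := ln a / (n + g m) <= ln N, the bound ln a >= g ln r + ln b
   gives ln b <= alpha n - g ln 2, and g / n >= 1 / (2 r m). *)
Lemma ln_rate_gain (n g m N r a b : nat) :
  (0 < n)%N -> (0 < N)%N -> r = (2 * N ^ m)%N -> (n <= 2 * r * m * g)%N ->
  (0 < b)%N -> (r ^ g * b <= a)%N -> (a <= N ^ (n + g * m))%N ->
  ln (b%:R : R) / n%:R + ln 2 / (2 * r * m)%:R <= ln (a%:R : R) / (n + g * m)%:R.
Proof.
move=> n0 N0 -> ngk b0 ba aN.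
set k := (2 * (2 * N ^ m) * m)%N in ngk *; set M := (n + g * m)%N.
have k0 : (0 < k)%N by move: (leq_trans n0 ngk); rewrite muln_gt0 => /andP[].
have M0 : (0 < M)%N by rewrite addn_gt0 n0.
have a0 : (0 < a)%N.
  by apply: leq_trans ba; rewrite muln_gt0 b0 expn_gt0 muln_gt0 expn_gt0 N0.
set lam := ln (N%:R : R); set alpha := ln (a%:R : R) / M%:R.
have alpha_le : alpha <= lam.
  rewrite ler_pdivrMr ?ltr0n // mulrC -ln_natX //.
  by apply: ler_ln_nat aN.
have ln_a_ge : g%:R * (ln 2 + m%:R * lam) + ln (b%:R : R) <= ln (a%:R : R).
  have r0 : (0 < 2 * N ^ m)%N by rewrite muln_gt0 expn_gt0 N0.
  have -> : ln 2 + m%:R * lam = ln ((2 * N ^ m)%N%:R : R).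
    by rewrite ln_natM ?expn_gt0 ?N0 // ln_natX.
  rewrite -ln_natX // -ln_natM ?expn_gt0 ?r0 //.
  by apply: ler_ln_nat ba; rewrite muln_gt0 expn_gt0 r0.
have ln_a : ln (a%:R : R) = alpha * (n%:R + g%:R * m%:R).
  by rewrite -natrM -natrD divfK // pnatr_eq0 -lt0n.
have ln2_ge0 : 0 <= ln (2 : R) by rewrite ln_ge0 // ler1n.
have gain : n%:R * (ln (2 : R) / k%:R) <= g%:R * ln 2.
  rewrite mulrA ler_pdivrMr ?ltr0n // mulrAC ler_wpM2r // -natrM ler_nat mulnC.
  exact: ngk.
have slack : g%:R * m%:R * (alpha - lam) <= 0.
  by rewrite mulr_ge0_le0 ?mulr_ge0 ?ler0n // subr_le0.
rewrite -(@ler_pM2l _ n%:R) ?ltr0n // mulrDr mulrCA divff ?mulr1 ?pnatr_eq0 -?lt0n //.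
lra.
Qed.

End LnNat.

Section GrowthRate.
Variables (R : realType) (Sigma : finType).
Local Open Scope ring_scope.
Implicit Types (L : set (seq Sigma)).

Definition growth_rate L (n : nat) : \bar R :=
  if count_len L n == 0%N then -oo%E
  else ((n%:R)^-1 * ln ((count_len L n)%:R : R))%:E.

Lemma growthE L : growth R L = limn_esup (growth_rate L).
Proof. by []. Qed.

Lemma count_len_le_card L n : (count_len L n <= #|Sigma| ^ n)%N.
Proof. by rewrite -card_tuple; apply/subset_leq_card/fintype.subsetP. Qed.

Lemma growth_rate_ge0 L n : (0 < count_len L n)%N -> (0 <= growth_rate L n)%E.
Proof.
move=> c0; rewrite /growth_rate gtn_eqF // lee_fin mulr_ge0 ?invr_ge0 //.
by rewrite ln_ge0 // ler1n.
Qed.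

Lemma growth_rate_le_ln_card L n :
  (0 < #|Sigma|)%N -> (growth_rate L n <= (ln (#|Sigma|%:R : R))%:E)%E.
Proof.
move=> Sigma0; rewrite /growth_rate; case: eqP => [_|/eqP cL0]; first exact: leNye.
rewrite lee_fin; have [->|n0] := posnP n; first by rewrite invr0 mul0r ln_ge0 // ler1n.
rewrite ler_pdivrMl ?ltr0n // -ln_natX //.
by apply: ler_ln_nat (count_len_le_card _ _); rewrite lt0n.
Qed.

Lemma growth_rate_gain L' L (m r n : nat) :
  (0 < #|Sigma|)%N -> (0 < m)%N -> r = (2 * #|Sigma| ^ m)%N -> (r * m <= n)%N ->
  (r ^ (n %/ (r * m)) * count_len L' n <= count_len L (n + n %/ (r * m) * m))%N ->
  (growth_rate L' n + (ln 2 / (2 * r * m)%:R)%:E <=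
   growth_rate L (n + n %/ (r * m) * m))%E.
Proof.
move=> Sigma0 m0 hr rmn count_gain; set g := (n %/ (r * m))%N.
have r0 : (0 < r)%N by rewrite hr muln_gt0 expn_gt0 Sigma0.
have rm0 : (0 < r * m)%N by rewrite muln_gt0 r0.
rewrite /growth_rate; case: eqP => [_|/eqP cL'0]; first by rewrite addNye leNye.
case: eqP => [cL0|/eqP cL0].
  have : (0 < r ^ g * count_len L' n)%N by rewrite muln_gt0 expn_gt0 r0 lt0n.
  by move/leq_trans/(_ count_gain); rewrite cL0.
rewrite -EFinD lee_fin [_^-1 * _]mulrC [X in _ <= X]mulrC.
apply: (ln_rate_gain R _ Sigma0 hr _ _ count_gain (count_len_le_card _ _)).
- exact: leq_trans rm0 rmn.
- have g0 : (0 < g)%N by rewrite divn_gt0.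
  have := ltn_pmod n rm0; have := divn_eq n (r * m); rewrite -/g -(mulnA 2 r m).
  move: (r * m) => q; nia.
- by rewrite lt0n.
Qed.

End GrowthRate.

Theorem mainTheorem17 (R : realType) (G : groupType) (K : set G)
  (Sigma : finType) (psi : Sigma -> G) :
  is_subgroup K ->
  generates_as_semigroup psi ->
  forall F : seq (seq Sigma),
    F != [::] ->
    (forall v, v \in F ->
       v != [::] /\ exists w, word_problem K psi w /\ is_factor v w) ->
    (growth R (avoid (word_problem K psi) F) < growth R (word_problem K psi))%E.
Proof.
move=> [K1 _] gen_psi [//|v F'] _ hF.
have vF : v \in v :: F' := mem_head v F'.
have [v0 _] := hF v vF.
have Sigma0 : (0 < #|Sigma|)%N.
  by case: v v0 hF vF => // x s _ _ _; apply/card_gt0P; exists x.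
have [u [_ psi_u]] := gen_psi (psi_word psi v)^-1%g.
set z := v ++ u; set m := size z.
have psi_z : psi_word psi z = 1%g by rewrite psi_word_cat psi_u mulgV.
have m0 : (0 < m)%N by rewrite /m size_cat addn_gt0 lt0n size_eq0 v0.
pose r := (2 * #|Sigma| ^ m)%N.
have rm0 : (0 < r * m)%N by rewrite !muln_gt0 expn_gt0 Sigma0 m0.
rewrite !growthE; apply: (@limn_esup_lt_reindex R _ _
  (fun n => n + n %/ (r * m) * m)%N (r * m) (ln 2 / (2 * r * m)%:R) (ln #|Sigma|%:R)).
- by rewrite divr_gt0 ?ln_gt0 ?ltr1n ?ltr0n // -mulnA muln_gt0.
- move=> n rmn; split; first exact: leq_addr.
  apply: growth_rate_gain => //.
  apply: (count_len_avoid_insert_blocks K psi_z v0 vF); first exact: prefix_infix.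
  by rewrite leq_trunc_div.
- by move=> n; apply: growth_rate_le_ln_card.
- move=> n; exists (n * m)%N; first by rewrite leq_pmulr.
  exact/growth_rate_ge0/count_len_word_problem_gt0.
Qed.
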